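(* Let $Z\subseteq\Sigma^{\mathbb Z}$ be a sofic shift and $(C_1,\dots,C_K)$ a non-redundant graph-induced covering of $Z$. If $\mathcal H_1=(S,E)$ with $S=\{s_1,\dots,s_K\}$ and $\mathcal H_2=(Q,F)$ with $Q=\{q_1,\dots,q_K\}$ are two presentations of it, with $C_j=\mathcal Z(\mathcal H_1,s_j)=\mathcal Z(\mathcal H_2,q_j)$ for all $j$, then for all $j,l$ and $i\in\Sigma$: $(s_j,s_l,i)\in E$ if and only if $(q_j,q_l,i)\in F$. In particular the presentation is unique up to isomorphism.
   Context: $\Sigma$ is a nonempty countable alphabet; $\Sigma^{\mathbb Z}$ the bi-infinite sequences over $\Sigma$, $\sigma(\bar z)_k=z_{k+1}$. A labeled graph is $\mathcal G=(S,E)$ with $S$ finite, $E\subseteq S\times S\times\Sigma$; standing assumption: every node has at least one incoming and one outgoing edge. A bi-infinite walk labeled by $\bar z$ is $(e_k)_{k\in\mathbb Z}$ with $e_k=(s_k,s_{k+1},z_k)\in E$; it starts at $s$ if $s_0=s$. $\mathcal Z(\mathcal G)$ (resp. $\mathcal Z(\mathcal G,s)$) is the set of labels of all bi-infinite walks (resp. those starting at $s$). A sofic shift is a set of the form $\mathcal Z(\mathcal G)$. A graph-induced covering of $Z$ is a family $(C_1,\dots,C_K)$ of subsets of $Z$ such that some graph $\mathcal G$ with nodes $s_1,\dots,s_K$ satisfies $\mathcal Z(\mathcal G)=Z$ and $C_j=\mathcal Z(\mathcal G,s_j)$ (a presentation); it is non-redundant if $C_i\cap C_j=\emptyset$ for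 $i\ne j$. Graphs $(S,E)$, $(Q,F)$ are isomorphic if there is a bijection $\varphi:S\to Q$ with $(s,q,i)\in E\iff(\varphi(s),\varphi(q),i)\in F$. *)

From mathcomp Require Import all_boot.
From Stdlib Require Import ZArith.
Set Implicit Arguments.
Unset Strict Implicit.
Unset Printing Implicit Defensive.

Definition biseq (Sigma : Type) := Z -> Sigma.

Definition bset (Sigma : Type) := biseq Sigma -> Prop.

Definition bset_eq (Sigma : Type) (A B : bset Sigma) : Prop :=
  forall z, A z <-> B z.

Record lgraph (Sigma : Type) := LGraph {
  node : finType;
  edge : node -> node -> Sigma -> Prop
}.

Definition essential (Sigma : Type) (G : lgraph Sigma) : Prop :=
  forall s : node G,
    (exists (p : node G) (i : Sigma), edge p s i) /\
    (exists (q : node G) (i : Sigma), edge s q i).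

Definition walk_labeled (Sigma : Type) (G : lgraph Sigma)
    (st : Z -> node G) (z : biseq Sigma) : Prop :=
  forall k : Z, edge (st k) (st (k + 1)%Z) (z k).

Definition ZG (Sigma : Type) (G : lgraph Sigma) : bset Sigma :=
  fun z => exists st : Z -> node G, walk_labeled st z.

Definition ZGs (Sigma : Type) (G : lgraph Sigma) (s : node G) : bset Sigma :=
  fun z => exists st : Z -> node G, st 0%Z = s /\ walk_labeled st z.

Definition sofic (Sigma : Type) (X : bset Sigma) : Prop :=
  exists G : lgraph Sigma, essential G /\ bset_eq (ZG G) X.

Definition presentation (Sigma : Type) (K : nat) (X : bset Sigma)
    (C : 'I_K -> bset Sigma) (G : lgraph Sigma) (s : 'I_K -> node G) : Prop :=
  essential G /\ bijective s /\ bset_eq (ZG G) X /\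
  forall j, bset_eq (C j) (ZGs (s j)).

Definition graph_induced_covering (Sigma : Type) (K : nat) (X : bset Sigma)
    (C : 'I_K -> bset Sigma) : Prop :=
  exists (G : lgraph Sigma) (s : 'I_K -> node G), @presentation Sigma K X C G s.

Definition non_redundant (Sigma : Type) (K : nat) (C : 'I_K -> bset Sigma) : Prop :=
  forall i j : 'I_K, i <> j -> forall z, ~ (C i z /\ C j z).

Definition lgraph_iso (Sigma : Type) (G H : lgraph Sigma) : Prop :=
  exists phi : node G -> node H, bijective phi /\
    forall (s q : node G) (i : Sigma), edge s q i <-> edge (phi s) (phi q) i.

From mathcomp Require Import all_boot.
From Stdlib Require Import ZArith Lia ClassicalEpsilon.

Set Implicit Arguments.
Unset Strict Implicit.
Unset Printing Implicit Defensive.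

(* The idea is that in a presentation (H, s) of a non-redundant covering C
   the edges of H are determined by C alone:
       (s_j, s_l, i) is an edge  <->  some z in C_j has z_0 = i and
                                     shift z in C_l.
   (->) uses that H is essential: any edge extends to a bi-infinite walk
   ([edge_in_walk]); its label lies in C_j and its shift in C_l.
   (<-) takes a walk from s_j labeled by z; its second node is some s_m,
   so shift z lies in C_m as well as in C_l, and non-redundancy forces m = l.
   Two presentations of the same covering therefore have the same edges
   along their enumerations ([edge_iff_covering]), and composing the two
   enumerations gives a graph isomorphism ([iso_of_enumerations]). *)

Definition shift {T : Type} (z : Z -> T) : Z -> T := fun k => z (k + 1)%Z.

Lemma walk_shift (Sigma : Type) (G : lgraph Sigma) (st : Z -> node G)
    (z : biseq Sigma) :
  walk_labeled st z -> walk_labeled (shift st) (shift z).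
Proof. by move=> Hw k; apply: Hw. Qed.

Section EssentialGraph.
Variables (Sigma : Type) (G : lgraph Sigma).
Hypothesis ess : essential G.

(* In an essential graph every edge lies on a bi-infinite walk: follow chosen
   outgoing edges forward from its target and chosen incoming edges backward
   from its source. *)
Lemma edge_in_walk (a b : node G) (i : Sigma) : edge a b i ->
  exists (st : Z -> node G) (z : biseq Sigma),
    [/\ st 0%Z = a, st 1%Z = b, z 0%Z = i & walk_labeled st z].
Proof.
move=> Hab.
have [nxt Hnxt] : exists nxt : node G -> node G * Sigma,
    forall x, edge x (nxt x).1 (nxt x).2.
  apply: (ClassicalEpsilon.choice (fun x p => edge x p.1 p.2)) => x.
  by have [_ [y [l Hy]]] := ess x; exists (y, l).
have [prv Hprv] : exists prv : node G -> node G * Sigma,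
    forall x, edge (prv x).1 x (prv x).2.
  apply: (ClassicalEpsilon.choice (fun x p => edge p.1 x p.2)) => x.
  by have [[y [l Hy]] _] := ess x; exists (y, l).
(* forward ray b = f 0 -> f 1 -> ..., backward ray a = h 0 <- h 1 <- ... *)
pose f n := ssrnat.iter n (fun x => (nxt x).1) b.
pose h n := ssrnat.iter n (fun x => (prv x).1) a.
exists (fun k => if (1 <=? k)%Z then f (Z.to_nat (k - 1)) else h (Z.to_nat (- k))).
exists (fun k => if (1 <=? k)%Z then (nxt (f (Z.to_nat (k - 1)))).2
         else if (k =? 0)%Z then i else (prv (h (Z.to_nat (- k - 1)))).2).
split=> // k.
case: (Z.leb_spec 1 k) => Hk.
- have -> : (1 <=? k + 1)%Z = true by apply/Z.leb_le; lia.
  have -> : Z.to_nat (k + 1 - 1) = (Z.to_nat (k - 1)).+1 by lia.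
  exact: Hnxt.
- case: (Z.eqb_spec k 0) => [-> //|Hk0].
  have -> : (1 <=? k + 1)%Z = false by apply/Z.leb_gt; lia.
  have -> : Z.to_nat (- k) = (Z.to_nat (- (k + 1))).+1 by lia.
  have -> : Z.to_nat (- k - 1) = Z.to_nat (- (k + 1)) by lia.
  exact: Hprv.
Qed.

End EssentialGraph.

Section Presentation.
Variables (Sigma : Type) (K : nat) (X : bset Sigma) (C : 'I_K -> bset Sigma).
Variables (H : lgraph Sigma) (s : 'I_K -> node H).
Hypothesis pres : presentation X C s.

Lemma edge_witness (j l : 'I_K) (i : Sigma) : edge (s j) (s l) i ->
  exists z : biseq Sigma, [/\ C j z, C l (shift z) & z 0%Z = i].
Proof.
case: pres => ess [_ [_ Cs]] He.
have [st [z [st0 st1 z0 Hw]]] := edge_in_walk ess He.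
exists z; split=> //; apply/Cs.
- by exists st.
- by exists (shift st); split; last exact: walk_shift.
Qed.

(* Conversely, for a non-redundant covering, such a witness forces the edge:
   the walk from s_j labeled by z passes through some s_m, and shift z lies
   in both C_m and C_l. *)
Lemma witness_edge (j l : 'I_K) (z : biseq Sigma) :
  non_redundant C -> C j z -> C l (shift z) -> edge (s j) (s l) (z 0%Z).
Proof.
case: pres => _ [[si sK siK] [_ Cs]] NR /Cs [st [st0 Hw]] Cl.
set m := si (st 1%Z).
have Cm : C m (shift z).
  by apply/Cs; exists (shift st); split; [rewrite /m siK | exact: walk_shift].
have -> : l = m.
  by case: (eqVneq l m) => // /eqP lm; case: (NR _ _ lm _ (conj Cl Cm)).
by rewrite /m siK -st0; apply: Hw.
Qed.

Lemma edge_iff_covering (j l : 'I_K) (i : Sigma) : non_redundant C ->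
  edge (s j) (s l) i <-> exists z : biseq Sigma, [/\ C j z, C l (shift z) & z 0%Z = i].
Proof.
move=> NR; split; first exact: edge_witness.
by case=> z [Cj Cl <-]; apply: witness_edge.
Qed.

End Presentation.

Lemma iso_of_enumerations (Sigma : Type) (I : Type)
    (H1 H2 : lgraph Sigma) (s : I -> node H1) (q : I -> node H2) :
  bijective s -> bijective q ->
  (forall (j l : I) (i : Sigma), edge (s j) (s l) i <-> edge (q j) (q l) i) ->
  lgraph_iso H1 H2.
Proof.
move=> [si sK siK] [qi qK qiK] E.
exists (fun x => q (si x)); split.
  by exists (fun y => s (qi y)) => x /=; rewrite ?qK ?sK.
by move=> a b i; rewrite -{1}(siK a) -{1}(siK b); apply: E.
Qed.

Theorem mainTheorem4 (Sigma : countType) (a0 : Sigma) (K : nat)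
    (X : bset Sigma) (C : 'I_K -> bset Sigma) :
  sofic X ->
  graph_induced_covering X C ->
  non_redundant C ->
  forall (H1 : lgraph Sigma) (s : 'I_K -> node H1)
         (H2 : lgraph Sigma) (q : 'I_K -> node H2),
  @presentation Sigma K X C H1 s ->
  @presentation Sigma K X C H2 q ->
  (forall (j l : 'I_K) (i : Sigma), edge (s j) (s l) i <-> edge (q j) (q l) i)
  /\ lgraph_iso H1 H2.
Proof.
move=> _ _ NR H1 s H2 q P1 P2.
have E : forall j l i, edge (s j) (s l) i <-> edge (q j) (q l) i.
  move=> j l i.
  rewrite (edge_iff_covering P1 _ _ _ NR).
  by rewrite (edge_iff_covering P2 _ _ _ NR).
split=> //.
by case: P1 => _ [bs _]; case: P2 => _ [bq _]; apply: iso_of_enumerations E.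
Qed.
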